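(* The group $\mathbb{Z}^\omega$ is the union of a Haar null set and a Haar meager set.
   Context: $\mathbb{Z}^\omega$ is the abelian Polish group of all integer sequences with coordinatewise addition and the product topology (discrete topology on $\mathbb{Z}$). For an abelian Polish group $G$: a set $A\subseteq G$ is Haar null if there exist a Borel set $B\supseteq A$ and a Borel probability measure $\mu$ on $G$ with $\mu(x+B)=0$ for every $x\in G$; a set $A\subseteq G$ is Haar meager if there exist a Borel set $B\supseteq A$, a compact metric space $K$ and a continuous map $f\colon K\to G$ such that $f^{-1}(x+B)$ is meager in $K$ for every $x\in G$. *)

From Stdlib Require Import Reals ZArith List.
Open Scope R_scope.

Definition Zomega : Type := nat -> Z.

Definition zadd (x y : Zomega) : Zomega := fun i => (x i + y i)%Z.
Definition zsub (x y : Zomega) : Zomega := fun i => (x i - y i)%Z.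

Definition translate (x : Zomega) (B : Zomega -> Prop) : Zomega -> Prop :=
  fun y => B (zsub y x).

(** Open sets of the product topology: basic open sets are cylinders
    determined by finitely many (initial) coordinates. *)
Definition zopen (U : Zomega -> Prop) : Prop :=
  forall x, U x -> exists n : nat,
    forall y, (forall i, (i < n)%nat -> y i = x i) -> U y.

Definition sigma_algebra (S : (Zomega -> Prop) -> Prop) : Prop :=
  S (fun _ => True) /\
  (forall A, S A -> S (fun x => ~ A x)) /\
  (forall A : nat -> Zomega -> Prop, (forall n, S (A n)) ->
     S (fun x => exists n, A n x)).

Definition borel (B : Zomega -> Prop) : Prop :=
  forall S : (Zomega -> Prop) -> Prop,
    sigma_algebra S -> (forall U, zopen U -> S U) -> S B.

(** Borel probability measures (values of mu outside Borel sets irrelevant) *)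
Definition borel_prob_measure (mu : (Zomega -> Prop) -> R) : Prop :=
  (forall B, borel B -> 0 <= mu B) /\
  mu (fun _ => True) = 1 /\
  (forall A : nat -> Zomega -> Prop,
     (forall n, borel (A n)) ->
     (forall m n x, m <> n -> A m x -> A n x -> False) ->
     infinite_sum (fun n => mu (A n)) (mu (fun x => exists n, A n x))).

Definition haar_null (A : Zomega -> Prop) : Prop :=
  exists B : Zomega -> Prop,
    borel B /\ (forall x, A x -> B x) /\
    exists mu, borel_prob_measure mu /\
      forall x : Zomega, mu (translate x B) = 0.

Definition is_metric {K : Type} (d : K -> K -> R) : Prop :=
  (forall x y, 0 <= d x y) /\
  (forall x y, d x y = 0 <-> x = y) /\
  (forall x y, d x y = d y x) /\
  (forall x y z, d x z <= d x y + d y z).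

Definition mopen {K : Type} (d : K -> K -> R) (U : K -> Prop) : Prop :=
  forall x, U x -> exists r, 0 < r /\ forall y, d x y < r -> U y.

Definition mcompact {K : Type} (d : K -> K -> R) : Prop :=
  forall (I : Type) (U : I -> K -> Prop),
    (forall i, mopen d (U i)) ->
    (forall k, exists i, U i k) ->
    exists l : list I, forall k, exists i, In i l /\ U i k.

Definition mcontinuous {K : Type} (d : K -> K -> R) (f : K -> Zomega) : Prop :=
  forall U, zopen U -> mopen d (fun k => U (f k)).

Definition nowhere_dense {K : Type} (d : K -> K -> R) (N : K -> Prop) : Prop :=
  forall U, mopen d U -> (exists k, U k) ->
    exists V, mopen d V /\ (exists k, V k) /\
      (forall k, V k -> U k) /\ (forall k, V k -> ~ N k).

Definition meager {K : Type} (d : K -> K -> R) (M : K -> Prop) : Prop :=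
  exists N : nat -> K -> Prop,
    (forall n, nowhere_dense d (N n)) /\
    (forall k, M k -> exists n, N n k).

Definition haar_meager (A : Zomega -> Prop) : Prop :=
  exists B : Zomega -> Prop,
    borel B /\ (forall x, A x -> B x) /\
    exists (K : Type) (d : K -> K -> R) (f : K -> Zomega),
      is_metric d /\ mcompact d /\ inhabited K /\ mcontinuous d f /\
      forall x : Zomega, meager d (fun k => translate x B (f k)).

From Pilot Require Import Defs.
From Stdlib Require Import Reals ZArith Arith List Lia Lra.
From Stdlib Require Import Classical ClassicalEpsilon FunctionalExtensionality PropExtensionality.
Open Scope R_scope.

(* Let A be the set of sequences y with y n = 0 (mod 2^n) for infinitely many n;
   Z^omega is the union of A and its complement.

   A is Haar null: push Lebesgue measure on [0,1) forward by t |-> (floor (2^n t))_n.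
   As floor (2^n t) lies in [0, 2^n), the preimage of x + A consists of the t lying,
   for infinitely many n, in the dyadic interval of level n indexed by x n mod 2^n;
   these intervals have lengths 2^-n, so this is a null set by Borel-Cantelli.

   The complement of A is Haar meager: map the Cantor space to Z^omega by sending k
   to the sequence f(k) whose n-th term counts the ones of k in the block
   [2^n, 2^(n+1)). Changing k only beyond a given position can still give f(k) n any
   value in [0, 2^n] for all large n, so for each x and N the set of k with
   f(k) n - x n <> 0 (mod 2^n) for all n >= N is nowhere dense; the preimage of the
   translate of the complement of A by x is the union of these sets over N. *)

Lemma borel_open U : zopen U -> borel U.
Proof. intros HU S _ HS. auto. Qed.

Lemma borel_compl A : borel A -> borel (fun x => ~ A x).
Proof. intros HA S HS HO. apply (proj1 (proj2 HS)), HA; assumption. Qed.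

Lemma borel_exists (A : nat -> Zomega -> Prop) :
  (forall n, borel (A n)) -> borel (fun x => exists n, A n x).
Proof. intros HA S HS HO. apply (proj2 (proj2 HS)). intro n. apply HA; assumption. Qed.

Lemma borel_forall (A : nat -> Zomega -> Prop) :
  (forall n, borel (A n)) -> borel (fun x => forall n, A n x).
Proof.
  intros HA. replace (fun x => forall n, A n x) with (fun x => ~ exists n, ~ A n x).
  - apply borel_compl, borel_exists. intro n. apply borel_compl, HA.
  - apply functional_extensionality. intro x. apply propositional_extensionality.
    split; [intros H n; apply NNPP; eauto | intros H [n Hn]; auto].
Qed.

Lemma zopen_coord n (P : Z -> Prop) : zopen (fun y => P (y n)).
Proof. intros x Hx. exists (S n). intros y Hy. rewrite Hy; auto. Qed.

Lemma zopen_translate x U : zopen U -> zopen (translate x U).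
Proof.
  intros HU y Hy. destruct (HU _ Hy) as [n Hn]. exists n. intros z Hz.
  apply Hn. intros i Hi. unfold zsub. rewrite Hz; auto.
Qed.

Lemma borel_translate x B : borel B -> borel (translate x B).
Proof.
  intros HB S [HT [HC HU]] HO. apply (HB (fun B => S (translate x B))).
  - split; [exact HT | split; [intros A; apply HC | intros A; apply HU]].
  - intros U HU'. apply HO, zopen_translate, HU'.
Qed.

Definition pow2Z (n : nat) : Z := Z.of_nat (2 ^ n).

Lemma pow2Z_pos n : (0 < pow2Z n)%Z.
Proof. unfold pow2Z. pose proof (Nat.pow_nonzero 2 n). lia. Qed.

Definition io_divisible (y : Zomega) : Prop :=
  forall N, exists n, (N <= n)%nat /\ (y n mod pow2Z n = 0)%Z.

Lemma borel_io_divisible : borel io_divisible.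
Proof.
  apply borel_forall. intro N. apply borel_exists. intro n. apply borel_open.
  exact (zopen_coord n (fun z => (N <= n)%nat /\ (z mod pow2Z n = 0)%Z)).
Qed.

Lemma half_pow_pos n : 0 < (/2) ^ n.
Proof. apply pow_lt. lra. Qed.

Lemma half_pow_lt_iff m p : (/2) ^ p < (/2) ^ m <-> (m < p)%nat.
Proof.
  assert (Hpos : forall n, 0 < 2 ^ n) by (intro; apply pow_lt; lra).
  rewrite !pow_inv. split.
  - intros H. destruct (Nat.lt_ge_cases m p) as [|Hpm]; auto.
    assert (Hle : 2 ^ p <= 2 ^ m) by (apply Rle_pow; [lra | exact Hpm]).
    pose proof (Rinv_le_contravar _ _ (Hpos p) Hle). lra.
  - intros Hmp. apply Rinv_lt_contravar.
    + apply Rmult_lt_0_compat; apply Hpos.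
    + apply Rlt_pow; [lra | exact Hmp].
Qed.

Lemma half_pow_small r : 0 < r -> exists m, (/2) ^ m < r.
Proof.
  intros Hr. destruct (pow_lt_1_zero (/2)) with (y := r) as [m Hm]; auto.
  { rewrite Rabs_right; lra. }
  exists m. specialize (Hm m (le_n _)). rewrite Rabs_right in Hm; auto.
  left; apply half_pow_pos.
Qed.

Definition cantor : Type := nat -> bool.

Definition first_diff_at (a b : cantor) (p : nat) : Prop :=
  a p <> b p /\ forall i, (i < p)%nat -> a i = b i.

Lemma first_diff_exists a b : a <> b -> exists p, first_diff_at a b p.
Proof.
  intros Hab.
  assert (Hdiff : exists n, a n <> b n).
  { apply NNPP. intros H. apply Hab, functional_extensionality. intro n.
    apply NNPP. eauto. }
  destruct (dec_inh_nat_subset_has_unique_least_element (fun n => a n <> b n))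
    as [p [[Hp Hleast] _]]; auto.
  { intro n. destruct (Bool.bool_dec (a n) (b n)); auto. }
  exists p. split; auto. intros i Hi. apply NNPP. intros H. specialize (Hleast i H). lia.
Qed.

Lemma first_diff_unique a b p q : first_diff_at a b p -> first_diff_at a b q -> p = q.
Proof.
  intros [Hp Hbp] [Hq Hbq].
  destruct (Nat.lt_total p q) as [h|[h|h]]; auto; exfalso; auto.
Qed.

Definition first_diff (a b : cantor) : nat := epsilon (inhabits 0%nat) (first_diff_at a b).

Lemma first_diff_spec a b : a <> b -> first_diff_at a b (first_diff a b).
Proof. intros Hab. unfold first_diff. apply epsilon_spec, first_diff_exists, Hab. Qed.

Definition cantor_dist (a b : cantor) : R :=
  if excluded_middle_informative (a = b) then 0 else (/2) ^ first_diff a b.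

Lemma cantor_dist_lt a b m :
  cantor_dist a b < (/2) ^ m <-> (forall i, (i <= m)%nat -> a i = b i).
Proof.
  unfold cantor_dist. destruct (excluded_middle_informative (a = b)) as [<-|Hab].
  - split; auto. intros _. apply half_pow_pos.
  - destruct (first_diff_spec a b Hab) as [Hp Hbelow]. rewrite half_pow_lt_iff. split.
    + intros Hlt i Hi. apply Hbelow. lia.
    + intros Hagree. destruct (Nat.lt_ge_cases m (first_diff a b)) as [|Hle]; auto.
      exfalso. apply Hp, Hagree, Hle.
Qed.

Lemma cantor_dist_refl a : cantor_dist a a = 0.
Proof. unfold cantor_dist. destruct (excluded_middle_informative (a = a)); tauto. Qed.

Lemma cantor_dist_nonneg a b : 0 <= cantor_dist a b.
Proof.
  unfold cantor_dist. destruct (excluded_middle_informative (a = b)); [lra|].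
  left. apply half_pow_pos.
Qed.

Lemma cantor_dist_sym a b : cantor_dist a b = cantor_dist b a.
Proof.
  unfold cantor_dist.
  destruct (excluded_middle_informative (a = b)) as [Eab|Hab],
           (excluded_middle_informative (b = a)) as [|Hba]; try congruence.
  f_equal. apply (first_diff_unique a b); [apply first_diff_spec, Hab|].
  destruct (first_diff_spec b a Hba) as [Hp Hbelow].
  split; auto. intros i Hi. symmetry. auto.
Qed.

(* Ultrametric inequality: a point closer than [d a c] to both [a] and [c] would agree
   with both at the first place where [a] and [c] differ. *)
Lemma cantor_dist_metric : is_metric cantor_dist.
Proof.
  split; [exact cantor_dist_nonneg | split; [|split; [exact cantor_dist_sym|]]].
  - intros a b. split; [|intros ->; apply cantor_dist_refl].
    unfold cantor_dist. destruct (excluded_middle_informative (a = b)); auto.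
    pose proof (half_pow_pos (first_diff a b)). lra.
  - intros a b c. pose proof (cantor_dist_nonneg a b). pose proof (cantor_dist_nonneg b c).
    destruct (excluded_middle_informative (a = c)) as [->|Hac].
    { rewrite cantor_dist_refl. lra. }
    assert (Hdac : cantor_dist a c = (/2) ^ first_diff a c).
    { unfold cantor_dist. destruct (excluded_middle_informative (a = c)); tauto. }
    destruct (Rlt_le_dec (cantor_dist a b) (cantor_dist a c)) as [hab|]; [|lra].
    destruct (Rlt_le_dec (cantor_dist b c) (cantor_dist a c)) as [hbc|]; [|lra].
    rewrite Hdac, cantor_dist_lt in hab, hbc.
    destruct (first_diff_spec a c Hac) as [Hp _].
    exfalso. apply Hp. rewrite hab, hbc; auto.
Qed.

Lemma cantor_ball_open k r : mopen cantor_dist (fun y => cantor_dist k y < r).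
Proof.
  intros y Hy. exists (r - cantor_dist k y). split; [lra|].
  intros z Hz. destruct cantor_dist_metric as [_ [_ [_ Htri]]]. specialize (Htri k y z). lra.
Qed.

Section CantorCompact.
Variables (I : Type) (U : I -> cantor -> Prop).
Hypothesis U_open : forall i, mopen cantor_dist (U i).
Hypothesis U_cover : forall k, exists i, U i k.

Definition extends (s : list bool) (k : cantor) : Prop :=
  forall i, (i < length s)%nat -> k i = nth i s false.

Definition finitely_covered (s : list bool) : Prop :=
  exists l : list I, forall k, extends s k -> exists i, In i l /\ U i k.

Lemma finitely_covered_split s :
  finitely_covered (s ++ false :: nil) -> finitely_covered (s ++ true :: nil) ->
  finitely_covered s.
Proof.
  intros [l1 H1] [l2 H2]. exists (l1 ++ l2). intros k Hk.
  assert (Hext : extends (s ++ k (length s) :: nil) k).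
  { intros i Hi. rewrite length_app in Hi. simpl in Hi.
    destruct (Nat.lt_ge_cases i (length s)).
    - rewrite app_nth1; auto.
    - replace i with (length s) by lia. rewrite app_nth2, Nat.sub_diag; auto. }
  destruct (k (length s)).
  - destruct (H2 k Hext) as [i [Hi Hu]]. exists i. split; auto. apply in_or_app; auto.
  - destruct (H1 k Hext) as [i [Hi Hu]]. exists i. split; auto. apply in_or_app; auto.
Qed.

(* König's argument: extend the prefix by a bit whose cylinder is not finitely covered. *)
Fixpoint uncovered_prefix (n : nat) : list bool :=
  match n with
  | O => nil
  | S n => let s := uncovered_prefix n in
           if excluded_middle_informative (finitely_covered (s ++ false :: nil))
           then s ++ true :: nil else s ++ false :: nil
  end.

Lemma uncovered_prefix_length n : length (uncovered_prefix n) = n.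
Proof.
  induction n; simpl; auto.
  destruct excluded_middle_informative; rewrite length_app; simpl; lia.
Qed.

Lemma uncovered_prefix_uncovered n :
  ~ finitely_covered nil -> ~ finitely_covered (uncovered_prefix n).
Proof.
  intros H0. induction n; simpl; auto.
  destruct excluded_middle_informative as [Hf|Hf]; auto.
  intros Ht. apply IHn, finitely_covered_split; auto.
Qed.

Lemma uncovered_prefix_app n j : exists t, uncovered_prefix (n + j) = uncovered_prefix n ++ t.
Proof.
  induction j as [|j [t Ht]].
  - exists nil. rewrite Nat.add_0_r, app_nil_r. auto.
  - rewrite Nat.add_succ_r. simpl. rewrite Ht.
    destruct excluded_middle_informative;
      [exists (t ++ true :: nil) | exists (t ++ false :: nil)]; rewrite app_assoc; auto.
Qed.

Definition uncovered_limit : cantor := fun i => nth i (uncovered_prefix (S i)) false.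

Lemma uncovered_limit_extends n : extends (uncovered_prefix n) uncovered_limit.
Proof.
  intros i Hi. rewrite uncovered_prefix_length in Hi. unfold uncovered_limit.
  destruct (uncovered_prefix_app (S i) (n - S i)) as [t Ht].
  replace (S i + (n - S i))%nat with n in Ht by lia. rewrite Ht.
  rewrite app_nth1; auto. rewrite uncovered_prefix_length. lia.
Qed.

Lemma nil_finitely_covered : finitely_covered nil.
Proof.
  apply NNPP. intros H0.
  destruct (U_cover uncovered_limit) as [i Hi].
  destruct (U_open i uncovered_limit Hi) as [r [Hr Hball]].
  destruct (half_pow_small r Hr) as [m Hm].
  apply (uncovered_prefix_uncovered (S m) H0). exists (i :: nil). intros k Hk.
  exists i. split; [left; auto|]. apply Hball, Rlt_trans with ((/2) ^ m); auto.
  apply cantor_dist_lt. intros j Hj.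
  rewrite (uncovered_limit_extends (S m)), Hk; auto; rewrite uncovered_prefix_length; lia.
Qed.

End CantorCompact.

Lemma cantor_compact : mcompact cantor_dist.
Proof.
  intros I U U_open U_cover. destruct (nil_finitely_covered I U U_open U_cover) as [l Hl].
  exists l. intros k. apply Hl. intros i Hi. simpl in Hi. lia.
Qed.

Fixpoint count_ones (k : cantor) (a l : nat) : nat :=
  match l with
  | O => O
  | S l => ((if k (a + l)%nat then 1 else 0) + count_ones k a l)%nat
  end.

Lemma count_ones_ext k k' a l :
  (forall i, (a <= i < a + l)%nat -> k i = k' i) -> count_ones k a l = count_ones k' a l.
Proof.
  induction l; simpl; intros H; auto.
  rewrite H by lia. rewrite IHl; auto. intros i Hi. apply H. lia.
Qed.

Lemma count_ones_threshold k a l r :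
  (forall i, (a <= i < a + l)%nat -> k i = Nat.ltb i (a + r)) -> count_ones k a l = Nat.min r l.
Proof.
  induction l; simpl; intros H; [lia|].
  rewrite H by lia. rewrite IHl by (intros i Hi; apply H; lia).
  destruct (Nat.ltb_spec (a + l) (a + r)); lia.
Qed.

Definition block_count (k : cantor) : Zomega :=
  fun n => Z.of_nat (count_ones k (2 ^ n) (2 ^ n)).

Lemma block_count_agree k k' n :
  (forall i, (i <= 2 ^ n)%nat -> k i = k' i) ->
  forall i, (i < n)%nat -> block_count k i = block_count k' i.
Proof.
  intros H i Hi. unfold block_count. f_equal. apply count_ones_ext. intros j Hj. apply H.
  assert (2 ^ S i <= 2 ^ n)%nat by (apply Nat.pow_le_mono_r; lia).
  rewrite Nat.pow_succ_r' in H0. lia.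
Qed.

Lemma block_count_continuous : mcontinuous cantor_dist block_count.
Proof.
  intros V HV k Hk. destruct (HV _ Hk) as [n Hn].
  exists ((/2) ^ (2 ^ n)). split; [apply half_pow_pos|].
  intros y Hy. apply Hn. rewrite cantor_dist_lt in Hy.
  intros i Hi. symmetry. apply (block_count_agree k y n); auto.
Qed.

Lemma block_count_prescribe k0 n r : (r <= 2 ^ n)%nat ->
  exists k, (forall i, (i < 2 ^ n)%nat -> k i = k0 i) /\ block_count k n = Z.of_nat r.
Proof.
  intros Hr. exists (fun i => if Nat.ltb i (2 ^ n) then k0 i else Nat.ltb i (2 ^ n + r)).
  split.
  - intros i Hi. destruct (Nat.ltb_spec i (2 ^ n)); [auto | lia].
  - unfold block_count. f_equal. rewrite (count_ones_threshold _ _ _ r); [lia|].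
    intros i Hi. destruct (Nat.ltb_spec i (2 ^ n)); [lia | auto].
Qed.

Definition eventually_nondivisible_from (x : Zomega) (N : nat) (k : cantor) : Prop :=
  forall n, (N <= n)%nat -> ((block_count k n - x n) mod pow2Z n <> 0)%Z.

(* Near any point, prescribe the count of a late block [n] to be [x n mod 2^n]; a small
   ball around the modified point then fails the condition at [n]. *)
Lemma nowhere_dense_eventually_nondivisible x N :
  nowhere_dense cantor_dist (eventually_nondivisible_from x N).
Proof.
  intros V HV [k0 Hk0].
  destruct (HV k0 Hk0) as [r [Hr Hball]].
  destruct (half_pow_small r Hr) as [m Hm].
  set (n := (N + m + 1)%nat).
  assert (Hmn : (m < 2 ^ n)%nat) by (pose proof (Nat.pow_gt_lin_r 2 n); unfold n in *; lia).
  pose proof (Z.mod_pos_bound (x n) (pow2Z n) (pow2Z_pos n)) as Hrange.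
  destruct (block_count_prescribe k0 n (Z.to_nat (x n mod pow2Z n))) as [k1 [Hk1 Hcount]].
  { unfold pow2Z in *. lia. }
  rewrite Z2Nat.id in Hcount by lia.
  exists (fun k => cantor_dist k1 k < (/2) ^ (2 ^ S n)).
  split; [apply cantor_ball_open | split; [|split]].
  - exists k1. rewrite cantor_dist_refl. apply half_pow_pos.
  - intros k Hk. apply Hball, Rlt_trans with ((/2) ^ m); auto.
    rewrite cantor_dist_lt in Hk |- *. intros i Hi.
    rewrite <- Hk1 by lia. apply Hk. rewrite Nat.pow_succ_r'. lia.
  - intros k Hk Hnd. rewrite cantor_dist_lt in Hk.
    apply (Hnd n); [unfold n; lia|].
    rewrite <- (block_count_agree k1 k (S n)), Hcount by auto.
    rewrite Zminus_mod_idemp_l, Z.sub_diag. reflexivity.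
Qed.

Lemma haar_meager_not_io_divisible : haar_meager (fun y => ~ io_divisible y).
Proof.
  exists (fun y => ~ io_divisible y).
  split; [apply borel_compl, borel_io_divisible | split; [auto|]].
  exists cantor, cantor_dist, block_count.
  split; [exact cantor_dist_metric | split; [exact cantor_compact|]].
  split; [exact (inhabits (fun _ => true)) | split; [exact block_count_continuous|]].
  intros x. exists (eventually_nondivisible_from x).
  split; [apply nowhere_dense_eventually_nondivisible|].
  intros k Hk. unfold translate in Hk.
  apply not_all_ex_not in Hk as [N HN]. exists N. intros n Hn Hdiv.
  apply HN. exists n. auto.
Qed.

Lemma Zfloor_mul_le s s' q : (0 < q)%Z ->
  (Zfloor (s * IZR q) <= Zfloor (s' * IZR q))%Z -> (Zfloor s <= Zfloor s')%Z.
Proof.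
  intros Hq Hle. apply Zfloor_lub.
  assert (Hq' : 0 < IZR q) by (apply IZR_lt; exact Hq).
  destruct (Zfloor_bound s) as [Hs _]. destruct (Zfloor_bound (s' * IZR q)) as [Hs' _].
  assert (Hmul : (Zfloor s * q <= Zfloor (s * IZR q))%Z).
  { apply Zfloor_lub. rewrite mult_IZR. apply Rmult_le_compat_r; lra. }
  apply Rmult_le_reg_r with (IZR q); auto.
  rewrite <- mult_IZR. apply Rle_trans with (IZR (Zfloor (s' * IZR q))); auto.
  apply IZR_le. lia.
Qed.

Definition dyadic_code (t : R) : Zomega := fun n => Zfloor (t * 2 ^ n).

Lemma pow2_IZR n : 2 ^ n = IZR (pow2Z n).
Proof. unfold pow2Z. rewrite <- INR_IZR_INZ, pow_INR. reflexivity. Qed.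

Lemma dyadic_code_nested t t' m : dyadic_code t m = dyadic_code t' m ->
  forall i, (i <= m)%nat -> dyadic_code t i = dyadic_code t' i.
Proof.
  intros E i Hi. unfold dyadic_code in *.
  assert (Hsplit : forall u, u * 2 ^ m = u * 2 ^ i * IZR (pow2Z (m - i))).
  { intro u. rewrite <- pow2_IZR, Rmult_assoc, <- pow_add. do 2 f_equal. lia. }
  rewrite !Hsplit in E.
  apply Z.le_antisymm; apply Zfloor_mul_le with (pow2Z (m - i));
    auto using pow2Z_pos; rewrite E; lia.
Qed.

Definition dyadic_lo (n : nat) (z : Z) : R := IZR z / 2 ^ n.
Definition dyadic_hi (n : nat) (z : Z) : R := (IZR z + 1) / 2 ^ n.

Lemma dyadic_hi_sub_lo n z : dyadic_hi n z - dyadic_lo n z = (/2) ^ n.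
Proof. unfold dyadic_hi, dyadic_lo. rewrite pow_inv. field. apply pow_nonzero. lra. Qed.

Lemma dyadic_lo_lt_hi n z : dyadic_lo n z < dyadic_hi n z.
Proof. pose proof (dyadic_hi_sub_lo n z). pose proof (half_pow_pos n). lra. Qed.

Lemma dyadic_code_eq_iff t n z :
  dyadic_code t n = z <-> dyadic_lo n z <= t < dyadic_hi n z.
Proof.
  assert (Hpos : 0 < / 2 ^ n) by (apply Rinv_0_lt_compat, pow_lt; lra).
  assert (Ht : t = t * 2 ^ n * / 2 ^ n) by (field; apply pow_nonzero; lra).
  unfold dyadic_code, dyadic_lo, dyadic_hi, Rdiv. split.
  - intros <-. destruct (Zfloor_bound (t * 2 ^ n)) as [H1 H2].
    rewrite Ht at 2 3. split; [apply Rmult_le_compat_r | apply Rmult_lt_compat_r]; lra.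
  - intros [H1 H2]. apply Zfloor_eq.
    rewrite Ht in H1, H2. split;
      [apply Rmult_le_reg_r with (/ 2 ^ n) | apply Rmult_lt_reg_r with (/ 2 ^ n)]; lra.
Qed.

Lemma dyadic_code_range t n : 0 <= t < 1 -> (0 <= dyadic_code t n < pow2Z n)%Z.
Proof.
  intros Ht. assert (Hpos : 0 < 2 ^ n) by (apply pow_lt; lra).
  unfold dyadic_code. split.
  - apply Zfloor_lub. simpl. nra.
  - apply lt_IZR. rewrite <- pow2_IZR. destruct (Zfloor_bound (t * 2 ^ n)). nra.
Qed.

From mathcomp Require Import all_boot all_order all_algebra.
From mathcomp Require Import boolp classical_sets reals constructive_ereal ereal.
From mathcomp Require Import topology normedtype sequences measure lebesgue_measure.
From mathcomp Require Import Rstruct Rstruct_topology.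
Import Order.TTheory GRing.Theory Num.Theory.
Local Open Scope classical_set_scope.
Local Open Scope ring_scope.

Definition unit_itv : set (measurableTypeR R) := `[0%R, 1%R[.

Lemma unit_itvP t : unit_itv t <-> Rle 0 t /\ Rlt t 1.
Proof.
rewrite /unit_itv /= in_itv /=; split; first by case/andP => /RleP ? /RltP ?.
by case => /RleP ? /RltP ?; apply/andP.
Qed.

Definition dyadic_itv (n : nat) (z : Z) : set (measurableTypeR R) :=
  `[dyadic_lo n z, dyadic_hi n z[.

Lemma dyadic_itvP n z t : dyadic_itv n z t <-> dyadic_code t n = z.
Proof.
rewrite dyadic_code_eq_iff /dyadic_itv /= in_itv /=.
split; first by case/andP => /RleP ? /RltP ?.
by case => /RleP ? /RltP ?; apply/andP.
Qed.

Definition code_preimage (S : Zomega -> Prop) : set (measurableTypeR R) :=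
  [set t | S (dyadic_code t)] `&` unit_itv.

Lemma code_preimageT : code_preimage (fun _ => True) = unit_itv.
Proof. by apply/seteqP; split => t //= []. Qed.

Lemma code_preimage_bigcup (A : nat -> Zomega -> Prop) :
  code_preimage (fun x => exists n, A n x) = \bigcup_n code_preimage (A n).
Proof.
apply/seteqP; split => t /=; first by case => -[n h1] h2; exists n.
by case => n _ [h1 h2]; split => //; exists n.
Qed.

Lemma code_preimage_sigma : Defs.sigma_algebra (fun S => measurable (code_preimage S)).
Proof.
have m01 : measurable unit_itv by exact: measurable_itv.
split; [by rewrite code_preimageT | split].
- move=> A mA; rewrite (_ : code_preimage _ = unit_itv `\` code_preimage A).
    exact: measurableD.
  by apply/seteqP; split => t /= [h1 h2]; split => //; [move=> [] | move=> h; apply: h2].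
- by move=> A mA; rewrite code_preimage_bigcup; exact: bigcupT_measurable.
Qed.

(* An open set is a union of cylinders on initial coordinates, and the preimage of such
   a cylinder is a union of dyadic intervals of one level. *)
Lemma measurable_code_preimage_open U : zopen U -> measurable (code_preimage U).
Proof.
move=> oU.
pose piece n j := dyadic_itv n (Z.of_nat j) `&` unit_itv.
rewrite (_ : code_preimage U =
    \bigcup_n \bigcup_(j in [set j | piece n j `<=` code_preimage U]) piece n j).
  apply: bigcupT_measurable => n; apply: bigcup_measurable => j _.
  by apply: measurableI; exact: measurable_itv.
apply/seteqP; split => t; last by case => n _ [j /= sub] /sub.
case => Ut It; have [n Hn] := oU _ Ut.
have [code_ge0 _] := dyadic_code_range t n (proj1 (unit_itvP t) It).
exists n => //; exists (Z.to_nat (dyadic_code t n)).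
- move=> t' [/dyadic_itvP Dt' It']; split => //; apply: Hn => i Hi.
  apply: (dyadic_code_nested t' t n _ i); [by rewrite Dt' Z2Nat.id | lia].
- by split => //; apply/dyadic_itvP; rewrite Z2Nat.id.
Qed.

Lemma measurable_code_preimage B : borel B -> measurable (code_preimage B).
Proof.
by move=> hB; apply: (hB (fun S => measurable (code_preimage S)));
  [exact: code_preimage_sigma | exact: measurable_code_preimage_open].
Qed.

Definition dyadic_measure (S : Zomega -> Prop) : R := fine (lebesgue_measure (code_preimage S)).

Lemma lebesgue_unit_itv : lebesgue_measure unit_itv = 1%:E.
Proof. by rewrite /unit_itv lebesgue_measure_itv /= lte_fin ltr01 oppr0 adde0. Qed.

Lemma lebesgue_code_preimage S : measurable (code_preimage S) ->
  lebesgue_measure (code_preimage S) = (dyadic_measure S)%:E.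
Proof.
move=> mS; rewrite /dyadic_measure fineK // ge0_fin_numE ?measure_ge0 //.
apply: (le_lt_trans (le_measure _ _ _ (@subIsetr _ _ unit_itv))); rewrite ?inE //.
  exact: measurable_itv.
by rewrite -[X in (X < _)%E]/(lebesgue_measure unit_itv) lebesgue_unit_itv ltry.
Qed.

(* The ascription to [realType] makes the limit live in the topology on [R] that
   [cvgrPdist_lt] expects. *)
Lemma cvg_eseries_infinite_sum (u : nat -> R) (l : R) :
  (fun n => (\sum_(0 <= i < n) u i)%:E : \bar (R : realType)) @ \oo --> l%:E ->
  infinite_sum u l.
Proof.
move/fine_cvg => /cvgrPdist_lt cv e /RltP epos; have [N _ HN] := cv e epos.
exists N => n /ssrnat.leP Nn; rewrite RdistE sum_f_R0E distrC; apply/RltP.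
by apply: HN => /=; apply: (ssrnat.leq_trans Nn).
Qed.

Lemma dyadic_measure_sigma_additive (A : nat -> Zomega -> Prop) :
  (forall n, borel (A n)) -> (forall m n x, m <> n -> A m x -> A n x -> False) ->
  infinite_sum (fun n => dyadic_measure (A n)) (dyadic_measure (fun x => exists n, A n x)).
Proof.
move=> bA disj; apply: cvg_eseries_infinite_sum.
have mA n : measurable (code_preimage (A n)) by apply: measurable_code_preimage.
have tA : trivIset setT (fun n => code_preimage (A n)).
  move=> i j _ _ [t [[h1 _] [h2 _]]].
  by apply/eqP/negPn/negP => /eqP ne; apply: (disj i j _ ne h1 h2).
rewrite -lebesgue_code_preimage; last exact: measurable_code_preimage (borel_exists A bA).
rewrite code_preimage_bigcup.
rewrite (_ : (fun n => _) = (fun n => \sum_(0 <= i < n) lebesgue_measure (code_preimage (A i)))).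
  exact: measure_sigma_additive mA tA.
by apply/funext => n; rewrite -sumEFin; apply: eq_bigr => i _; rewrite lebesgue_code_preimage.
Qed.

Lemma dyadic_measure_prob : borel_prob_measure dyadic_measure.
Proof.
split; [|split].
- by move=> B _; apply/RleP; exact: fine_ge0 (measure_ge0 _ _).
- by rewrite /dyadic_measure code_preimageT lebesgue_unit_itv.
- exact: dyadic_measure_sigma_additive.
Qed.

Lemma half_pow_geometric k : 2^-1 ^+ k = 2 / (2 ^ (k + 1))%:R :> R.
Proof. by rewrite natrX exprD expr1 invfM mulrCA divff ?mulr1 ?exprVn. Qed.

Lemma lebesgue_dyadic_itv n z : lebesgue_measure (dyadic_itv n z) = (2^-1 ^+ n)%:E.
Proof.
rewrite /dyadic_itv lebesgue_measure_itv /= lte_fin.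
have /RltP -> := dyadic_lo_lt_hi n z.
by rewrite -EFinD; congr (_%:E); rewrite -RpowE; exact: dyadic_hi_sub_lo.
Qed.

Lemma dyadic_itv_summable (z : nat -> Z) :
  (\sum_(n <oo) lebesgue_measure (dyadic_itv n (z n)) < +oo)%E.
Proof.
rewrite (_ : (\sum_(n <oo) _)%E = (2 / 2 ^+ 0)%:E) ?ltry //.
apply: cvg_lim => //; move: (@cvg_geometric_eseries_half R 2 0); rewrite /eseries.
rewrite (_ : (fun m => \sum_(0 <= n < m) lebesgue_measure (dyadic_itv n (z n))) =
             (fun m => \sum_(0 <= k < m) (2 / (2 ^ (k + 1))%:R)%:E)) //.
by apply/funext => m; apply: eq_bigr => k _; rewrite lebesgue_dyadic_itv half_pow_geometric.
Qed.

Section TranslatesNull.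
Variable x : Zomega.

Lemma code_preimage_translate_sub :
  code_preimage (translate x io_divisible) `<=`
  lim_sup_set (fun n => dyadic_itv n (x n mod pow2Z n)).
Proof.
move=> t [Hio /unit_itvP It] N _.
have [n [Nn Hdiv]] := Hio N.
exists n; first exact/ssrnat.leP.
have range := dyadic_code_range t n It.
apply/dyadic_itvP; rewrite -(Z.mod_small (dyadic_code t n) (pow2Z n)) //.
exact/Z.cong_iff_0.
Qed.

Lemma dyadic_measure_translate_io_divisible : dyadic_measure (translate x io_divisible) = 0.
Proof.
have mS := measurable_code_preimage _ (borel_translate x _ borel_io_divisible).
have mD n : measurable (dyadic_itv n (x n mod pow2Z n)) by exact: measurable_itv.
have null := lim_sup_set_cvg0 (mu := lebesgue_measure) mD (dyadic_itv_summable _).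
have : (lebesgue_measure (code_preimage (translate x io_divisible)) <= 0)%E.
  rewrite -null; apply: le_measure; rewrite ?inE //; last exact: code_preimage_translate_sub.
  by apply: bigcapT_measurable => k; apply: bigcup_measurable => j _.
rewrite lebesgue_code_preimage // lee_fin => le0.
by apply/eqP; rewrite eq_le le0 /=; exact: fine_ge0 (measure_ge0 _ _).
Qed.

End TranslatesNull.

Lemma haar_null_io_divisible : haar_null io_divisible.
Proof.
exists io_divisible; split; [exact: borel_io_divisible | split => //].
exists dyadic_measure; split; [exact: dyadic_measure_prob|].
exact: dyadic_measure_translate_io_divisible.
Qed.

Theorem mainTheorem14 :
  exists A B : Zomega -> Prop,
    haar_null A /\ haar_meager B /\ (forall x : Zomega, A x \/ B x).
Proof.
exists io_divisible, (fun y => ~ io_divisible y).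
split; [exact: haar_null_io_divisible | split; [exact: haar_meager_not_io_divisible|]].
by move=> y; exact: Classical_Prop.classic.
Qed.
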